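(* For every strategy $\sigma$ and adversary $\xi$ of $\widetilde{\mathcal M}$, the map $\beta\mapsto V_{\sigma,\xi,\beta}$ is continuous on $(0,1]$ (componentwise, i.e. $\beta\mapsto V_{\sigma,\xi,\beta}(q)$ is continuous for every $q\in Q$).
   Context: Fix $n\ge1$, $s\ge1$, $\varepsilon\ge0$, a finite mode set $U=\{1,\dots,m\}$, continuous $f_u:\mathbb R^n\to\mathbb R^n$, and a Borel probability $\widehat p_v$ on $\mathbb R^n$ with finite $s$-th moment; $T^u_{p_v}(B\mid x):=p_v(\{v:f_u(x)+v\in B\})$. Abstraction. $X\subset\mathbb R^n$ bounded Borel, $X_{\rm tgt}\subset X$; $Q_{\rm safe}$ a finite family of pairwise disjoint Borel sets with union $X$, each either contained in or disjoint from $X_{\rm tgt}$; $Q_{\rm tgt}$ those contained in $X_{\rm tgt}$; $q_u:=\mathbb R^n\setminus X$; $Q:=Q_{\rm safe}\cup\{q_u\}$; $A:=U$. Bounds $\underline P\le\overline P$ in $[0,1]$ on $Q\times A\times Q$ with $\sum_{q'}\underline P(q,a,q')\le1\le\sum_{q'}\overline P(q,a,q')$, $\underline P(q,a,q')\le\inf_{x\in q}T^a_{\widehat p_v}(q'\mid x)$, $\overline P(q,a,q')\ge\sup_{x\in q}T^a_{\widehat p_v}(q'\mid x)$ for $q\in Q_{\rm safe}$, and $\underline P(q_u,a,q_u)=\overline P(q_u,a,q_u)=1$. $\widehat\Gamma_{q,a}:=\{\gamma\in\mathcal D(Q):\underline P(q,a,\cdot)\le\gamma\le\overline P(q,a,\cdot)\}$.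 With $c(q,q'):=\inf\{\|x-y\|^s:x\in q,y\in q'\}$ and $\mathcal T_c(\gamma,\gamma')$ the minimal $c$-transport cost over couplings of $\gamma,\gamma'$, $\Gamma_{q,a}:=\{\gamma:\exists\widehat\gamma\in\widehat\Gamma_{q,a},\ \mathcal T_c(\gamma,\widehat\gamma)\le\varepsilon^s\}$ for $q\in Q_{\rm safe}$, $\Gamma_{q_u,a}:=\widehat\Gamma_{q_u,a}$. Discounted robust MDP with rewards. $\widetilde{\mathcal M}=(Q,A,\widetilde\Gamma,r,\beta)$ where $\widetilde\Gamma_{q,a}:=\{\delta_{q_u}\}$ for $q\in Q_{\rm tgt}$ and $\widetilde\Gamma_{q,a}:=\Gamma_{q,a}$ otherwise, reward $r(q):=1$ if $q\in Q_{\rm tgt}$ and $0$ otherwise, and discount $\beta\in(0,1]$. A strategy $\sigma$ maps finite paths to actions; an adversary $\xi$ maps each finite path $\omega^k$ and action $a$ to a distribution in $\widetilde\Gamma_{\mathrm{last}(\omega^k),a}$; $P^{q,\sigma}_\xi$ is the path measure with $\omega(0)=q$ and $P[\omega(k+1)=q'\mid\omega^k]=\xi(\omega^k,\sigma(\omega^k))(q')$. The value function is $V_{\sigma,\xi,\beta}(q):=\mathbb E_{P^{q,\sigma}_\xi}\big[\sum_{k=0}^\infty\beta^k r(\omega(k))\big]$. *)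

From HB Require Import structures.
From mathcomp Require Import all_boot all_order all_algebra.
From mathcomp Require Import all_classical all_reals all_analysis.
Set Implicit Arguments. Unset Strict Implicit. Unset Printing Implicit Defensive.
Import Order.TTheory GRing.Theory Num.Theory.
Import numFieldNormedType.Exports.
Local Open Scope classical_set_scope.
Local Open Scope ring_scope.

(* The state space R^n is modelled as n.-tuple R, which MathComp-Analysis
   equips with the product sigma-algebra of the Borel sets of R (= the Borel
   sigma-algebra of R^n).                    *)
Section Rn.
Context {R : realType} {n : nat}.

Definition vadd (x y : n.-tuple R) : n.-tuple R := [tuple tnth x i + tnth y i | i < n].
Definition vsub (x y : n.-tuple R) : n.-tuple R := [tuple tnth x i - tnth y i | i < n].
Definition enorm (x : n.-tuple R) : R := Num.sqrt (\sum_(i < n) tnth x i ^+ 2).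

Definition continuous_Rn (g : n.-tuple R -> n.-tuple R) : Prop :=
  forall x (e : R), 0 < e -> exists d : R, 0 < d /\
    forall y, enorm (vsub y x) < d -> enorm (vsub (g y) (g x)) < e.

Definition bounded_Rn (A : set (n.-tuple R)) : Prop :=
  exists M : R, forall x, A x -> enorm x <= M.

Definition Tker (p : probability (n.-tuple R) R) (fu : n.-tuple R -> n.-tuple R)
  (B : set (n.-tuple R)) (x : n.-tuple R) : \bar R :=
  p [set v | B (vadd (fu x) v)].
End Rn.

(* Abstract states: Q = Q_safe \cup {q_u}, with Q_safe indexed by a finite
   type K (Some k) and q_u = None.                                        *)
Definition AState (K : finType) := option K.

Section Abstraction.
Context {R : realType} {n : nat} {K : finType}.
Variable (X : set (n.-tuple R)) (cell : K -> set (n.-tuple R)).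

Definition cellQ (q : option K) : set (n.-tuple R) :=
  match q with Some k => cell k | None => ~` X end.

Definition is_tgt (Xtgt : set (n.-tuple R)) (q : option K) : bool :=
  match q with Some k => `[< cell k `<=` Xtgt >] | None => false end.

Definition reward (Xtgt : set (n.-tuple R)) (q : option K) : R :=
  (is_tgt Xtgt q)%:R.

Definition is_dist (g : option K -> R) : Prop :=
  (forall q, 0 <= g q) /\ \sum_(q : option K) g q = 1.

Definition dirac_qu : option K -> R := fun q => (q == None)%:R.

Definition cost (s : R) (q q' : option K) : \bar R :=
  ereal_inf [set ((enorm (vsub x y)) `^ s)%:E
            | x in cellQ q & y in cellQ q'].

Definition coupling (g g' : option K -> R) (pi : option K -> option K -> R) : Prop :=
  (forall q q', 0 <= pi q q') /\
  (forall q, \sum_(q' : option K) pi q q' = g q) /\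
  (forall q', \sum_(q : option K) pi q q' = g' q').

Definition transport_cost (s : R) (g g' : option K -> R) : \bar R :=
  ereal_inf [set (\sum_(q : option K) \sum_(q' : option K) (pi q q')%:E * cost s q q')%E
            | pi in coupling g g'].

Variable (m : nat) (lo hi : option K -> 'I_m -> option K -> R).

Definition Gamma_hat (q : option K) (a : 'I_m) : set (option K -> R) :=
  [set g | is_dist g /\ forall q', lo q a q' <= g q' <= hi q a q'].

Definition Gamma (s eps : R) (q : option K) (a : 'I_m) : set (option K -> R) :=
  match q with
  | Some _ => [set g | is_dist g /\
                 exists gh, Gamma_hat q a gh /\
                   (transport_cost s g gh <= (eps `^ s)%:E)%E]
  | None => Gamma_hat q a
  end.

Definition Gamma_tilde (Xtgt : set (n.-tuple R)) (s eps : R) (q : option K) (a : 'I_m)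
  : set (option K -> R) :=
  if is_tgt Xtgt q then [set dirac_qu] else Gamma s eps q a.

(* strategies: finite paths -> actions;
   adversaries: finite paths -> actions -> distributions on Q *)
Definition strategy := seq (option K) -> 'I_m.
Definition adversary := seq (option K) -> 'I_m -> option K -> R.

Definition admissible_adversary (Xtgt : set (n.-tuple R)) (s eps : R) (xi : adversary) :=
  forall (q0 : option K) (w : seq (option K)) (a : 'I_m),
    Gamma_tilde Xtgt s eps (last q0 w) a (xi (q0 :: w) a).

(* probability, under P^{.,sigma}_xi, that the path prefix p continues with w *)
Fixpoint ext_prob (sigma : strategy) (xi : adversary) (p : seq (option K))
  (w : seq (option K)) : R :=
  match w with
  | [::] => 1
  | q' :: w' => xi p (sigma p) q' * ext_prob sigma xi (rcons p q') w'
  end.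

Definition exp_reward_at (Xtgt : set (n.-tuple R)) (sigma : strategy) (xi : adversary)
  (q : option K) (k : nat) : R :=
  \sum_(w : k.-tuple (option K)) reward Xtgt (last q w) * ext_prob sigma xi [:: q] w.

(* V_{sigma,xi,beta}(q) = E[ sum_k beta^k r(omega(k)) ]
                        = sum_k beta^k E[ r(omega(k)) ]   (Tonelli)       *)
Definition value (Xtgt : set (n.-tuple R)) (sigma : strategy) (xi : adversary)
  (beta : R) (q : option K) : \bar R :=
  (\sum_(0 <= k <oo) ((beta ^+ k) * exp_reward_at Xtgt sigma xi q k)%:E)%E.

End Abstraction.

From HB Require Import structures.
From mathcomp Require Import all_boot all_order all_algebra.
From mathcomp Require Import all_classical all_reals all_analysis.
From mathcomp Require Import lra.
Import Order.TTheory GRing.Theory Num.Theory.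
Import numFieldNormedType.Exports.
Local Open Scope classical_set_scope.
Local Open Scope ring_scope.

(** Under any strategy and admissible adversary the path law is a probability,
    so the expected reward [a k] at step [k] lies in [0, 1], and
    [V(beta) = sum_k beta^k a k] is a power series with coefficients in
    [0, 1].  Such a series is lower semicontinuous (a supremum of polynomials)
    and nondecreasing on [0, 1], which gives continuity from the left.  Below
    [1] it is dominated term by term by the geometric series, whence
    [V(y) - V(x) <= 1/(1-y) - 1/(1-x)] for [x <= y < 1], which gives continuity
    from the right. *)

Section path_probabilities.
Context {R : realType} {K : finType} {m : nat}.

Lemma Gamma_tilde_is_dist {n : nat} (X Xtgt : set (n.-tuple R))
    (cell : K -> set (n.-tuple R)) (lo hi : option K -> 'I_m -> option K -> R)
    (s eps : R) q a (g : option K -> R) :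
  Gamma_tilde X cell lo hi Xtgt s eps q a g -> is_dist g.
Proof.
rewrite /Gamma_tilde; case: ifP => _; last by case: q => [k [] |] //; case.
move=> ->; split=> [q'|]; first by rewrite /dirac_qu ler0n.
rewrite (bigD1 None) //= big1 ?addr0 // => q' /negbTE.
by rewrite /dirac_qu => ->.
Qed.

Variables (sigma : @strategy K m) (xi : @adversary R K m).
Hypothesis xi_dist : forall q0 w, is_dist (xi (q0 :: w) (sigma (q0 :: w))).

Lemma ext_prob_ge0 q0 p w : 0 <= ext_prob sigma xi (q0 :: p) w.
Proof.
elim: w p => [|q' w IH] p //=.
by rewrite mulr_ge0 ?(IH (rcons p q')) //; case: (xi_dist q0 p) => ->.
Qed.

Lemma sum_ext_prob k q0 p :
  \sum_(w : k.-tuple (option K)) ext_prob sigma xi (q0 :: p) w = 1.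
Proof.
elim: k p => [|k IH] p.
  rewrite (eq_bigr (fun=> 1)) => [|w _]; last by rewrite tuple0.
  by rewrite sumr_const card_tuple expn0.
have cons_bij : {on [pred _ | true],
    bijective (fun qw : option K * k.-tuple (option K) => [tuple of qw.1 :: qw.2])}.
  exists (fun w => (thead w, [tuple of behead w])) => [[q' w] _ | w _] /=.
    by congr pair; apply: val_inj.
  by rewrite -tuple_eta.
rewrite (reindex _ cons_bij) /= -(pair_bigA _ (fun q' (w : k.-tuple _) =>
  ext_prob sigma xi (q0 :: p) [tuple of q' :: w])) /=.
under eq_bigr => q' _ do rewrite -mulr_sumr (IH (rcons p q')) mulr1.
by case: (xi_dist q0 p).
Qed.

Lemma exp_reward_at_ge0 {n : nat} (cell : K -> set (n.-tuple R)) Xtgt q k :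
  0 <= exp_reward_at cell Xtgt sigma xi q k.
Proof.
by apply: sumr_ge0 => w _; rewrite mulr_ge0 ?ler0n ?(ext_prob_ge0 q [::]).
Qed.

Lemma exp_reward_at_le1 {n : nat} (cell : K -> set (n.-tuple R)) Xtgt q k :
  exp_reward_at cell Xtgt sigma xi q k <= 1.
Proof.
rewrite -(sum_ext_prob k q [::]); apply: ler_sum => w _.
rewrite ler_piMl ?(ext_prob_ge0 q [::]) //.
by rewrite /reward; case: is_tgt.
Qed.

End path_probabilities.

Section ereal_facts.
Context {R : realType}.
Local Open Scope ereal_scope.

Lemma cvge_real_bounds {T : Type} (F : set_system T) {FF : Filter F}
    (h : T -> \bar R) (l : \bar R) :
  (forall z : R, z%:E < l -> \forall y \near F, z%:E < h y) ->
  (forall z : R, l < z%:E -> \forall y \near F, h y < z%:E) ->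
  h @ F --> l.
Proof.
case: l => [l||] lb ub; last 2 first.
- by apply/cvgeyPgt => z; apply: lb; rewrite ltry.
- by apply/cvgeNyPlt => z; apply: ub; rewrite ltNyr.
have near_fin r : (r > 0)%R -> \forall y \near F,
    h y \is a fin_num /\ (l - r < fine (h y) < l + r)%R.
  move=> r0; have := lb (l - r)%R; have := ub (l + r)%R.
  rewrite !lte_fin => /(_ ltac:(lra)) ub' /(_ ltac:(lra)) lb'.
  apply: filterS2 ub' lb' => y; case: (h y) => [x||] //=.
  by rewrite !lte_fin => -> ->.
apply/fine_cvgP; split; first by apply: filterS (near_fin 1%R ltr01) => y [].
apply/cvgrPdist_lt => e e0; apply: filterS (near_fin e e0) => y [_].
by rewrite ltr_distlC.
Qed.

Lemma eseries_geometric (x : R) : (0 <= x < 1)%R ->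
  \sum_(0 <= k <oo) (x ^+ k)%:E = ((1 - x)^-1)%:E.
Proof.
move=> /andP[x0 x1]; apply: cvg_lim => //.
apply: cvg_EFin; first by apply: nearW => N; rewrite sumEFin.
have := @cvg_geometric_series R 1 x; rewrite ger0_norm // mul1r => /(_ x1).
apply: cvg_trans; apply: near_eq_cvg; apply: nearW => N /=.
by rewrite sumEFin /series /=; apply: eq_bigr => k _; rewrite mul1r.
Qed.

End ereal_facts.

Section power_series_with_unit_coefficients.
Context {R : realType} (a : nat -> R).
Hypothesis a_ge0 : forall k, 0 <= a k.
Hypothesis a_le1 : forall k, a k <= 1.
Local Open Scope ereal_scope.

Definition epower_series (x : R) : \bar R :=
  \sum_(0 <= k <oo) ((x ^+ k) * a k)%:E.

Let term_ge0 (x : R) : (0 <= x)%R -> forall k, 0 <= ((x ^+ k) * a k)%:E.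
Proof. by move=> x0 k; rewrite lee_fin mulr_ge0 ?exprn_ge0. Qed.

Lemma epower_series_ge0 (x : R) : (0 <= x)%R -> 0 <= epower_series x.
Proof. by move=> x0; apply: nneseries_ge0 => k _ _; apply: term_ge0. Qed.

Lemma epower_series_le (x y : R) : (0 <= x <= y)%R ->
  epower_series x <= epower_series y.
Proof.
move=> /andP[x0 xy]; apply: lee_nneseries => [k _ _|k _]; first exact: term_ge0.
by rewrite lee_fin ler_wpM2r // lerXn2r // ?nnegrE // (le_trans x0).
Qed.

Lemma epower_series_fin_num (x : R) : (0 <= x < 1)%R ->
  epower_series x \is a fin_num.
Proof.
move=> /[dup] x01 /andP[x0 _].
rewrite ge0_fin_numE ?epower_series_ge0 //.
apply: (@le_lt_trans _ _ ((1 - x)^-1)%:E); last exact: ltry.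
rewrite -eseries_geometric //; apply: lee_nneseries => [k _ _|k _].
  exact: term_ge0.
by rewrite lee_fin ler_piMr ?exprn_ge0.
Qed.

(* Termwise, [y^k a_k - x^k a_k <= y^k - x^k]. *)
Lemma epower_series_increment (x y : R) : (0 <= x <= y)%R -> (y < 1)%R ->
  epower_series y + ((1 - x)^-1)%:E <= epower_series x + ((1 - y)^-1)%:E.
Proof.
move=> /andP[x0 xy] y1; have y0 := le_trans x0 xy.
rewrite -!eseries_geometric ?x0 ?y0 ?(le_lt_trans xy y1) //.
have geo_ge0 (t : R) : (0 <= t)%R -> forall k, 0 <= (t ^+ k)%:E.
  by move=> t0 k; rewrite lee_fin exprn_ge0.
rewrite /epower_series -!nneseriesD => //; try by move=> k _ _; rewrite ?term_ge0 ?geo_ge0.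
apply: lee_nneseries => [k _ _|k _]; first by rewrite adde_ge0 ?term_ge0 ?geo_ge0.
have xyk : (x ^+ k <= y ^+ k)%R by rewrite lerXn2r // nnegrE.
by rewrite -!EFinD lee_fin; have := a_ge0 k; have := a_le1 k; nra.
Qed.

Lemma epower_series_lsc (x z : R) : (0 <= x)%R -> z%:E < epower_series x ->
  \forall y \near x, (0 <= y)%R -> z%:E < epower_series y.
Proof.
move=> x0; rewrite /epower_series.
rewrite (cvg_lim _ (ereal_nondecreasing_cvgn
  (ereal_nondecreasing_series (fun k _ _ => term_ge0 _ x0 k)))) //.
move=> /ereal_sup_gt[_ [N _ <-]]; rewrite /= sumEFin lte_fin => zN.
have partial_sum_cont :
    (fun y : R => \sum_(0 <= k < N) y ^+ k * a k)%R @ x -->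
    (\sum_(0 <= k < N) x ^+ k * a k)%R.
  have partial_sumE (y : R) :
      (\sum_(0 <= k < N) y ^+ k * a k)%R = (\poly_(k < N) a k).[y].
    by rewrite horner_poly big_mkord; apply: eq_bigr => k _; rewrite mulrC.
  rewrite (funext partial_sumE) partial_sumE.
  exact: continuous_horner.
near=> y => y0.
apply: (@lt_le_trans _ _ (\sum_(0 <= k < N) ((y ^+ k) * a k)%:E)).
  by rewrite sumEFin lte_fin; near: y; exact: cvgr_gt partial_sum_cont _ zN.
by apply: nneseries_lim_ge => k _ _; apply: term_ge0.
Unshelve. all: by end_near.
Qed.

Lemma epower_series_usc (x z : R) : (0 < x <= 1)%R -> epower_series x < z%:E ->
  \forall y \near x, (0 < y <= 1)%R -> epower_series y < z%:E.
Proof.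
move=> /andP[x0 x1] gxz.
have below (y : R) : (0 < y <= x)%R -> epower_series y < z%:E.
  move=> /andP[y0 yx]; apply: le_lt_trans gxz.
  by apply: epower_series_le; rewrite ltW.
have [x_lt1|x_ge1] := ltP x 1%R; last first.
  by apply: filterE => y /andP[y0 y1]; rewrite below // y0 (le_trans y1 x_ge1).
have gx_fin : epower_series x \is a fin_num.
  by rewrite epower_series_fin_num ?x_lt1 ?ltW.
move: gxz; rewrite -(fineK gx_fin) lte_fin => gxz.
have inv_cvg : (fun y : R => (1 - y)^-1)%R @ x --> ((1 - x)^-1)%R.
  apply: cvgV; first by rewrite subr_eq0 gt_eqF.
  exact: cvgB (cvg_cst _) cvg_id.
have y_lt1 : \forall y \near x, (y < 1)%R by exact: lt_nbhsl.
have inv_close : \forall y \near x,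
    ((1 - y)^-1 < (1 - x)^-1 + (z - fine (epower_series x)))%R.
  by move: inv_cvg => /cvgr_lt; apply; lra.
apply: filterS2 y_lt1 inv_close => y y1 inv_y /andP[y0 _].
have [yx|xy] := leP y x; first by rewrite below ?y0 // -(fineK gx_fin) lte_fin.
have gy_fin : epower_series y \is a fin_num.
  by rewrite epower_series_fin_num ?y1 ?ltW.
have := @epower_series_increment x y; rewrite (ltW x0) (ltW xy) => /(_ isT y1).
rewrite -(fineK gx_fin) -(fineK gy_fin) -!EFinD lee_fin lte_fin.
lra.
Qed.

Lemma epower_series_continuous : {within `]0%R, 1%R], continuous epower_series}.
Proof.
apply/subspace_continuousP => x /=; rewrite in_itv /= => x01.
apply: cvge_real_bounds => z; rewrite /from_subspace /= => zx.
- apply: filterS (epower_series_lsc x z (ltW (andP x01).1) zx) => y lsc_y.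
  by rewrite /= in_itv /= => /andP[y0 _]; exact/lsc_y/ltW.
- apply: filterS (epower_series_usc x z x01 zx) => y usc_y.
  by rewrite /= in_itv /=; exact: usc_y.
Qed.

End power_series_with_unit_coefficients.

Theorem lemma3
  (R : realType) (n : nat) (s eps : R) (m : nat)
  (f : 'I_m -> n.-tuple R -> n.-tuple R)
  (p : probability (n.-tuple R) R)
  (X Xtgt : set (n.-tuple R)) (K : finType) (cell : K -> set (n.-tuple R))
  (lo hi : option K -> 'I_m -> option K -> R)
  (* standing assumptions on the dynamics and the noise *)
  (hs : 1 <= s) (heps : 0 <= eps)
  (hf : forall u, continuous_Rn (f u))
  (hmoment : (\int[p]_v ((enorm v) `^ s)%:E < +oo)%E)
  (* the partition *)
  (hXmeas : measurable X) (hXbd : bounded_Rn X) (hXtgt : Xtgt `<=` X)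
  (hcellmeas : forall k, measurable (cell k))
  (hdisj : forall k k', k != k' -> cell k `&` cell k' = set0)
  (hcover : \bigcup_k cell k = X)
  (htgtcell : forall k, cell k `<=` Xtgt \/ cell k `&` Xtgt = set0)
  (* the transition bounds *)
  (hlohi : forall q a q', 0 <= lo q a q' /\ lo q a q' <= hi q a q' /\ hi q a q' <= 1)
  (hsum : forall q a, \sum_(q' : option K) lo q a q' <= 1
                      /\ 1 <= \sum_(q' : option K) hi q a q')
  (hlo : forall k a q' x, cell k x ->
           ((lo (Some k) a q')%:E <= Tker p (f a) (cellQ X cell q') x)%E)
  (hhi : forall k a q' x, cell k x ->
           (Tker p (f a) (cellQ X cell q') x <= (hi (Some k) a q')%:E)%E)
  (hqu : forall a, lo None a None = 1 /\ hi None a None = 1)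
  (* strategy and adversary of the discounted robust MDP *)
  (sigma : @strategy K m) (xi : @adversary R K m)
  (hxi : admissible_adversary X cell lo hi Xtgt s eps xi)
  (q : option K) :
  {within `]0, 1], continuous (fun beta : R => value cell Xtgt sigma xi beta q)}.
Proof.
have xi_dist q0 w : is_dist (xi (q0 :: w) (sigma (q0 :: w))).
  exact: Gamma_tilde_is_dist (hxi q0 w _).
apply: (@epower_series_continuous R (exp_reward_at cell Xtgt sigma xi q)).
- by move=> k; apply: exp_reward_at_ge0.
- by move=> k; apply: exp_reward_at_le1.
Qed.
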